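(* For every pure three-qubit state $|\phi_{ABC}\rangle$, $$S^{\max}_{total}(|\phi_{ABC}\rangle)+3\,E_W(|\phi_{ABC}\rangle)\le\frac{10}{3},$$ where $S^{\max}_{total}=\max\{S_{AB}+S_{AC},\,S_{AB}+S_{BC},\,S_{AC}+S_{BC}\}$ and $E_W=\min\{\mathcal C_{AB}^2,\mathcal C_{AC}^2,\mathcal C_{BC}^2\}$.
   Context: For a two-qubit state $\rho$ let $t_{kl}=\mathrm{Tr}[\rho\,\sigma_k\otimes\sigma_l]$ ($\sigma_k$ Pauli matrices) and $S(\rho)=\sum_{k,l=1}^3 t_{kl}^2$; $\rho_{ij}$ are the two-qubit reduced states of $|\phi_{ABC}\rangle$ and $S_{ij}=S(\rho_{ij})$. $\mathcal C_{ij}$ is the Wootters concurrence of $\rho_{ij}$: $\mathcal C(\rho)=\max\{0,\lambda_1-\lambda_2-\lambda_3-\lambda_4\}$, with $\lambda_1\ge\dots\ge\lambda_4$ the square roots of the eigenvalues of $\rho(\sigma_2\otimes\sigma_2)\rho^*(\sigma_2\otimes\sigma_2)$. *)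

From HB Require Import structures.
From mathcomp Require Import all_boot all_order all_algebra.
From mathcomp Require Import reals.
From mathcomp Require Import complex mxtens.
Set Implicit Arguments. Unset Strict Implicit. Unset Printing Implicit Defensive.
Import Order.TTheory GRing.Theory Num.Theory.
Local Open Scope ring_scope.
Local Open Scope complex_scope.

Section QubitDefs.
Variable R : realType.
Local Notation C := (R[i]).

(* A three-qubit pure state: amplitudes psi a b c for |a b c>, a b c in {0,1}. *)
Definition unit_state (psi : 'I_2 -> 'I_2 -> 'I_2 -> C) : Prop :=
  \sum_(a < 2) \sum_(b < 2) \sum_(c < 2) psi a b c * (psi a b c)^* = 1.

Definition adjmx m n (A : 'M[C]_(m, n)) : 'M[C]_(n, m) := (map_mx conjc A)^T.

Definition ket (a : 'I_2) : 'cV[C]_2 := delta_mx a 0.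

Definition ket2 (x y : 'I_2) : 'cV[C]_(2 * 2) := ket x *t ket y.

(* reduced two-qubit states (partial traces of |psi><psi|) *)
Definition red_state (v : 'I_2 -> 'cV[C]_(2 * 2)) : 'M[C]_(2 * 2) :=
  \sum_(k < 2) v k *m adjmx (v k).

Definition rho_AB psi := red_state (fun c => \sum_(a < 2) \sum_(b < 2) psi a b c *: ket2 a b).
Definition rho_AC psi := red_state (fun b => \sum_(a < 2) \sum_(c < 2) psi a b c *: ket2 a c).
Definition rho_BC psi := red_state (fun a => \sum_(b < 2) \sum_(c < 2) psi a b c *: ket2 b c).

Definition sigma1 : 'M[C]_2 := \matrix_(i, j) (if i == j then 0 else 1).
Definition sigma2 : 'M[C]_2 :=
  \matrix_(i, j) (if i == j then 0 else if i == 0 then - Complex 0 1 else Complex 0 1).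
Definition sigma3 : 'M[C]_2 :=
  \matrix_(i, j) (if i == j then (if i == 0 then 1 else -1) else 0).
Definition pauli (k : 'I_3) : 'M[C]_2 :=
  if val k == 0%N then sigma1 else if val k == 1%N then sigma2 else sigma3.

(* t_kl = Tr[rho sigma_k (x) sigma_l]  (a real number for Hermitian rho;
   we record its real part) *)
Definition tcorr (rho : 'M[C]_(2 * 2)) (k l : 'I_3) : R :=
  complex.Re (\tr (rho *m (pauli k *t pauli l))).

Definition Scorr (rho : 'M[C]_(2 * 2)) : R :=
  \sum_(k < 3) \sum_(l < 3) tcorr rho k l ^+ 2.

Definition eigenvalues n (M : 'M[C]_n) : seq C :=
  sval (closed_field_poly_normal (char_poly M)).

(* Wootters concurrence: lambda_i = square roots of the eigenvalues of
   rho (s2 x s2) rho^* (s2 x s2) (these eigenvalues are real and >= 0),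
   sorted decreasingly *)
Definition concurrence (rho : 'M[C]_(2 * 2)) : R :=
  let Y := sigma2 *t sigma2 in
  let M := rho *m Y *m map_mx conjc rho *m Y in
  let l := sort (fun x y : R => y <= x)
             [seq Num.sqrt (complex.Re z) | z <- eigenvalues M] in
  Num.max 0 (l`_0 - l`_1 - l`_2 - l`_3).

Definition S_total_max psi : R :=
  let sAB := Scorr (rho_AB psi) in
  let sAC := Scorr (rho_AC psi) in
  let sBC := Scorr (rho_BC psi) in
  Num.max (sAB + sAC) (Num.max (sAB + sBC) (sAC + sBC)).

Definition E_W psi : R :=
  Num.min (concurrence (rho_AB psi) ^+ 2)
    (Num.min (concurrence (rho_AC psi) ^+ 2) (concurrence (rho_BC psi) ^+ 2)).

End QubitDefs.

From HB Require Import structures.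
From mathcomp Require Import all_boot all_order all_algebra.
From mathcomp Require Import reals complex mxtens ring lra.
Import Order.TTheory GRing.Theory Num.Theory Normc.

(* Write d_X for the determinant of the one-qubit reduced state rho_X of a unit
   vector psi and tau for its three-tangle.  Expanding rho_BC in the Pauli basis
   gives S_BC = 1 - 8 d_A + 4 d_B + 4 d_C.  The nonzero eigenvalues of Wootters'
   matrix for rho_BC are the roots of z^2 - F z + (tau/4)^2, where
   F = 2 (d_B + d_C - d_A) is its trace, hence C_BC^2 <= F - tau/2.  Together,
   S_AB + S_AC + 3 C_BC^2 <= 2 + 2 (d_A + d_B + d_C) - 3 tau/2, and the bound
   10/3 follows from d_A + d_B + d_C <= 3 tau/4 + 2/3.  Both sides of the latter
   scale alike under local operations of the form (scalar) x SU(2), which bring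
   psi to Acin's canonical form psi_001 = psi_010 = psi_011 = 0, where it is an
   elementary estimate.  The same bound for the other two pairs controls the
   maximum plus three times the minimum. *)

Set Implicit Arguments. Unset Strict Implicit. Unset Printing Implicit Defensive.
Local Open Scope complex_scope.
Local Open Scope ring_scope.

Lemma big_ord2 (V : nmodType) (F : 'I_2 -> V) : \sum_(i < 2) F i = F 0 + F 1.
Proof. by rewrite big_ord_recr big_ord1; congr (F _ + F _); apply: val_inj. Qed.

Lemma big_ord3 (V : nmodType) (F : 'I_3 -> V) : \sum_(i < 3) F i = F 0 + F 1 + F 2.
Proof. by rewrite big_ord_recr big_ord2; congr (F _ + F _ + F _); apply: val_inj. Qed.

Lemma big_mxtens (V : nmodType) m n (F : 'I_(m * n) -> V) :
  \sum_(r < m * n) F r = \sum_(i < m) \sum_(j < n) F (mxtens_index (i, j)).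
Proof.
rewrite pair_big /= (reindex (@mxtens_index m n)) /=; first by apply: eq_bigr => -[].
by exists (@mxtens_unindex m n) => x _; rewrite ?mxtens_indexK ?mxtens_unindexK.
Qed.

Lemma ord2P (i : 'I_2) : i = 0 \/ i = 1.
Proof. by case: i => [[|[|]]] // ?; [left|right]; apply: val_inj. Qed.

(* Unlike [rmorphD] and friends, these rewrite to terms that [ring] recognises
   as the same atoms [x^*]. *)
Section Conjugation.
Variable C : numClosedFieldType.
Implicit Types x y : C.

Lemma conjCD x y : (x + y)^* = x^* + y^*. Proof. exact: rmorphD. Qed.
Lemma conjCB x y : (x - y)^* = x^* - y^*. Proof. exact: rmorphB. Qed.
Lemma conjCM x y : (x * y)^* = x^* * y^*. Proof. exact: rmorphM. Qed.
Lemma conjCN x : (- x)^* = - x^*. Proof. exact: rmorphN. Qed.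

End Conjugation.

Lemma tensmxZl (R : pzRingType) m n p q (c : R) (A : 'M[R]_(m, n)) (B : 'M[R]_(p, q)) :
  (c *: A) *t B = c *: (A *t B).
Proof.
apply/matrixP => i j; case: (mxtens_indexP i) => i1 i2; case: (mxtens_indexP j) => j1 j2.
by rewrite tensmxE [RHS]mxE tensmxE mxE mulrA.
Qed.

Lemma tensmxZr (R : comPzRingType) m n p q (c : R) (A : 'M[R]_(m, n)) (B : 'M[R]_(p, q)) :
  A *t (c *: B) = c *: (A *t B).
Proof.
apply/matrixP => i j; case: (mxtens_indexP i) => i1 i2; case: (mxtens_indexP j) => j1 j2.
by rewrite tensmxE [RHS]mxE tensmxE mxE mulrCA.
Qed.

Section ComplexFacts.
Variable R : rcfType.
Local Notation C := R[i].

Lemma normc_ge0 (z : C) : 0 <= normc z.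
Proof. by case: z => a b; apply: sqrtr_ge0. Qed.

Lemma normc_gt0 (z : C) : z != 0 -> 0 < normc z.
Proof.
by move=> nz; rewrite lt_def normc_ge0 andbT; apply: contra nz => /eqP /eq0_normc ->.
Qed.

Lemma mulcJ_normc (z : C) : z * z^* = (normc z ^+ 2)%:C.
Proof.
case: z => a b; rewrite /= sqr_sqrtr ?addr_ge0 ?sqr_ge0 //.
by simpc; rewrite [b * a]mulrC addNr -!expr2.
Qed.

Lemma normcC_mul (z : C) : (normc z)%:C * (normc z)%:C = z * z^*.
Proof. by rewrite mulcJ_normc rmorphXn expr2. Qed.

Lemma normc_real (r : R) : 0 <= r -> normc r%:C = r.
Proof. by move=> r0; rewrite /= expr0n addr0 sqrtr_sqr ger0_norm. Qed.

Lemma conjc_fixed_Re (z : C) : z^* = z -> (complex.Re z)%:C = z.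
Proof. by case: z => a b [] /= hb; congr Complex; lra. Qed.

Lemma Re_natM n (z : C) : complex.Re (n%:R * z) = n%:R * complex.Re z.
Proof. by rewrite !mulr_natl raddfMn. Qed.

Lemma Re_sum (s : seq C) : complex.Re (\sum_(z <- s) z) = \sum_(z <- s) complex.Re z.
Proof.
by elim: s => [|z s IH]; rewrite ?big_nil // !big_cons -IH; case: z; case: (\sum_(_ <- s) _).
Qed.

Lemma Re_realM (r : R) (z : C) : complex.Re (r%:C * z) = r * complex.Re z.
Proof. by case: z => a b; simpc. Qed.

End ComplexFacts.

Section Adjoint.
Variable R : realType.
Local Notation C := R[i].

Lemma adjmxK m n (A : 'M[C]_(m, n)) : adjmx (adjmx A) = A.
Proof. by apply/matrixP => i j; rewrite !mxE conjcK. Qed.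

Lemma adjmx0 m n : adjmx (0 : 'M[C]_(m, n)) = 0.
Proof. by rewrite /adjmx map_mx0 trmx0. Qed.

Lemma adjmxD m n (A B : 'M[C]_(m, n)) : adjmx (A + B) = adjmx A + adjmx B.
Proof. by rewrite /adjmx map_mxD linearD. Qed.

Lemma adjmxM m n p (A : 'M[C]_(m, n)) (B : 'M[C]_(n, p)) :
  adjmx (A *m B) = adjmx B *m adjmx A.
Proof. by rewrite /adjmx map_mxM trmx_mul. Qed.

Lemma adjmx_tens m n p q (A : 'M[C]_(m, n)) (B : 'M[C]_(p, q)) :
  adjmx (A *t B) = adjmx A *t adjmx B.
Proof. by rewrite /adjmx map_mxT trmx_tens. Qed.

Lemma mxtrace_adj n (A : 'M[C]_n) : \tr (adjmx A) = (\tr A)^*.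
Proof. by rewrite /adjmx mxtrace_tr trace_map_mx. Qed.

Lemma adjmx_red_state (v : 'I_2 -> 'cV[C]_(2 * 2)) : adjmx (red_state v) = red_state v.
Proof.
rewrite /red_state (big_morph _ (@adjmxD _ _) (@adjmx0 _ _)).
by apply: eq_bigr => k _; rewrite adjmxM adjmxK.
Qed.

Lemma mxtrace_herm_conj n (A B : 'M[C]_n) :
  adjmx A = A -> adjmx B = B -> (\tr (A *m B))^* = \tr (A *m B).
Proof. by move=> hA hB; rewrite -mxtrace_adj adjmxM hA hB mxtrace_mulC. Qed.

End Adjoint.

Section Pauli.
Variable R : realType.
Local Notation C := R[i].

Definition tau : 'M[C]_2 := \matrix_(i, j) (if i == j then 0 else if i == 0 then -1 else 1).

Lemma sigma2E : sigma2 R = 'i%C *: tau.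
Proof.
apply/matrixP => i j; rewrite !mxE.
by case: (ord2P i) => ->; case: (ord2P j) => ->; rewrite /= ?mulr0 ?mulrN ?mulr1.
Qed.

Lemma trmx_tau : tau^T = - tau.
Proof.
apply/matrixP => a b; rewrite !mxE.
by case: (ord2P a) => ->; case: (ord2P b) => ->; rewrite /= ?oppr0 ?opprK.
Qed.

Lemma map_conjc_tau : map_mx conjc tau = tau.
Proof.
apply/matrixP => a b; rewrite !mxE; case: (ord2P a) => ->; case: (ord2P b) => ->;
  by apply/eqP; rewrite eq_complex /= ?oppr0 !eqxx.
Qed.

Lemma adjmx_pauli k : adjmx (pauli R k) = pauli R k.
Proof.
apply/matrixP => i j; rewrite !mxE /pauli.
by case: ifP => _; [|case: ifP => _]; rewrite !mxE;
  case: (ord2P i) => ->; case: (ord2P j) => ->;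
  apply/eqP; rewrite eq_complex /= ?oppr0 ?opprK !eqxx.
Qed.

Lemma tcorr_sqrE (rho : 'M[C]_(2 * 2)) k l : adjmx rho = rho ->
  (tcorr rho k l ^+ 2)%:C = \tr (rho *m (pauli R k *t pauli R l)) ^+ 2.
Proof.
move=> hrho; rewrite rmorphXn; congr (_ ^+ 2); apply: conjc_fixed_Re.
by rewrite mxtrace_herm_conj // adjmx_tens !adjmx_pauli.
Qed.

(* [ring] does not know that ['i ^+ 2 = -1]; pulling the phase ['i] out of
   [sigma2] leaves matrices with entries in {0, 1, -1}. *)
Definition pauli_phase (k : 'I_3) : C := if k == 1 then 'i%C else 1.
Definition rpauli (k : 'I_3) : 'M[C]_2 := if k == 1 then tau else pauli R k.

Lemma pauli_phaseE k : pauli R k = pauli_phase k *: rpauli k.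
Proof.
rewrite /pauli_phase /rpauli; case: eqP => [-> | _]; last by rewrite scale1r.
exact: sigma2E.
Qed.

Lemma ScorrE (rho : 'M[C]_(2 * 2)) : adjmx rho = rho ->
  (Scorr rho)%:C = \sum_(k < 3) \sum_(l < 3)
    pauli_phase k ^+ 2 * pauli_phase l ^+ 2 * \tr (rho *m (rpauli k *t rpauli l)) ^+ 2.
Proof.
move=> hrho; rewrite rmorph_sum; apply: eq_bigr => k _.
rewrite rmorph_sum; apply: eq_bigr => l _; apply: etrans; first exact: tcorr_sqrE.
by rewrite !pauli_phaseE tensmxZl tensmxZr scalerA -scalemxAr mxtraceZ !exprMn.
Qed.

End Pauli.

Section Amplitudes.
Variable R : realType.
Local Notation C := R[i].
Implicit Types psi : 'I_2 -> 'I_2 -> 'I_2 -> C.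

Definition swapAB psi : 'I_2 -> 'I_2 -> 'I_2 -> C := fun a b c => psi b a c.
Definition swapAC psi : 'I_2 -> 'I_2 -> 'I_2 -> C := fun a b c => psi c b a.
Definition swapBC psi : 'I_2 -> 'I_2 -> 'I_2 -> C := fun a b c => psi a c b.

Definition sqnorm psi : C := \sum_(a < 2) \sum_(b < 2) \sum_(c < 2) psi a b c * (psi a b c)^*.

Definition gramA psi (a b : 'I_2) : C :=
  \sum_(j < 2) \sum_(k < 2) psi a j k * (psi b j k)^*.
Definition detA psi : C := gramA psi 0 0 * gramA psi 1 1 - gramA psi 0 1 * gramA psi 1 0.
Definition detB psi : C := detA (swapAB psi).
Definition detC psi : C := detA (swapAC psi).

Lemma detA_swapBC psi : detA (swapBC psi) = detA psi.
Proof. by rewrite /detA /gramA; congr (_ * _ - _ * _); apply: exchange_big. Qed.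

Lemma detC_swapAB psi : detC (swapAB psi) = detC psi.
Proof. exact: (detA_swapBC (swapAC psi)). Qed.

Lemma detB_swapAC psi : detB (swapAC psi) = detB psi.
Proof. exact: (detA_swapBC (swapAB psi)). Qed.

Lemma sqnorm_swapAB psi : sqnorm (swapAB psi) = sqnorm psi.
Proof. by rewrite /sqnorm exchange_big. Qed.

Lemma sqnorm_swapAC psi : sqnorm (swapAC psi) = sqnorm psi.
Proof. by rewrite /sqnorm /swapAC !big_ord2; ring. Qed.

Definition slice psi (a : 'I_2) : 'cV[C]_(2 * 2) :=
  \sum_(j < 2) \sum_(k < 2) psi a j k *: ket2 R j k.

Lemma ket2E x y j k : ket2 R x y (mxtens_index (j, k)) 0 = (j == x)%:R * (k == y)%:R.
Proof.
rewrite [in LHS](_ : 0 = mxtens_index ((0 : 'I_1), (0 : 'I_1))); last exact: val_inj.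
by rewrite (tensmxE (ket R x) (ket R y) j k 0 0) !mxE eqxx !andbT.
Qed.

Lemma slice_tens psi a j k : slice psi a (mxtens_index (j, k)) 0 = psi a j k.
Proof.
rewrite /slice summxE big_ord2 !summxE !big_ord2 ![fun_of_matrix (_ *: _) _ _]mxE !ket2E.
by case: (ord2P j) => ->; case: (ord2P k) => ->; rewrite /=; ring.
Qed.

Lemma mxtrace_red_state (v : 'I_2 -> 'cV[C]_(2 * 2)) X :
  \tr (red_state v *m X) =
  \sum_(a < 2) \sum_(r < 2 * 2) \sum_(s < 2 * 2) v a s 0 * (v a r 0)^* * X r s.
Proof.
rewrite /red_state mulmx_suml raddf_sum /=; apply: eq_bigr => a _.
rewrite /mxtrace exchange_big /=; apply: eq_bigr => r _.
rewrite mxE; apply: eq_bigr => s _.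
by rewrite mxE big_ord1 !mxE mulrC mulrA.
Qed.

Lemma mxtrace_rhoBC_tens psi (A B : 'M[C]_2) :
  \tr (rho_BC psi *m (A *t B)) =
  \sum_(a < 2) \sum_(j' < 2) \sum_(k' < 2) \sum_(j < 2) \sum_(k < 2)
    psi a j k * (psi a j' k')^* * (A j' j * B k' k).
Proof.
rewrite (mxtrace_red_state (slice psi)); apply: eq_bigr => a _.
rewrite big_mxtens; apply: eq_bigr => j' _; apply: eq_bigr => k' _.
rewrite big_mxtens; apply: eq_bigr => j _; apply: eq_bigr => k _.
by rewrite !slice_tens tensmxE.
Qed.

Lemma Scorr_rhoBC psi :
  (Scorr (rho_BC psi))%:C = sqnorm psi ^+ 2 - 8 * detA psi + 4 * detB psi + 4 * detC psi.
Proof.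
rewrite ScorrE; last exact: adjmx_red_state.
under eq_bigr => k _ do under eq_bigr => l _ do rewrite mxtrace_rhoBC_tens !big_ord2.
rewrite !big_ord3 /pauli_phase /rpauli /= sqr_i /pauli /= !mxE /=.
rewrite /sqnorm /detB /detC /detA /gramA /swapAB /swapAC !big_ord2.
ring.
Qed.

End Amplitudes.

Section Eigenvalues.
Variable R : realType.
Local Notation C := R[i].
Variables (n : nat) (M : 'M[C]_n).

Lemma char_poly_eigenvalues : char_poly M = \prod_(z <- eigenvalues M) ('X - z%:P).
Proof.
rewrite /eigenvalues; case: (closed_field_poly_normal _) => r /= ->.
by rewrite (monicP (char_poly_monic _)) scale1r.
Qed.

Lemma size_eigenvalues : size (eigenvalues M) = n.
Proof.
by have := size_char_poly M; rewrite char_poly_eigenvalues size_prod_XsubC => -[].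
Qed.

Lemma eigenvalue_mem z : z \in eigenvalues M -> eigenvalue M z.
Proof. by move=> zs; rewrite eigenvalue_root_char char_poly_eigenvalues root_prod_XsubC. Qed.

Lemma sum_eigenvalues : (0 < n)%N -> \sum_(z <- eigenvalues M) z = \tr M.
Proof.
move=> n_gt0; have := char_poly_trace M n_gt0.
rewrite char_poly_eigenvalues -[in n.-1]size_eigenvalues coefPn_prod_XsubC.
  exact: oppr_inj.
by rewrite size_eigenvalues -lt0n.
Qed.

End Eigenvalues.

Section WoottersCombination.
Variable R : realFieldType.

Definition wootters_comb (xs : seq R) : R :=
  let l := sort (fun x y : R => y <= x) xs in
  Num.max 0 (l`_0 - l`_1 - l`_2 - l`_3).

Lemma wootters_comb_le (xs : seq R) (a b : R) :
  size xs = 4%N -> 0 <= b -> b <= a ->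
  {in xs, forall x, [\/ x = 0, x = a | x = b]} ->
  \sum_(x <- xs) x ^+ 2 = a ^+ 2 + b ^+ 2 ->
  wootters_comb xs <= a - b.
Proof.
move=> size_xs b_ge0 le_ba xs_vals sum_xs; rewrite /wootters_comb.
have : perm_eq (sort (fun x y : R => y <= x) xs) xs by rewrite perm_sort.
have : sorted (fun x y : R => y <= x) (sort (fun x y : R => y <= x) xs).
  by apply: sort_sorted => x y; rewrite le_total.
case: (sort _ xs) => [|l0 [|l1 [|l2 [|l3 [|? ?]]]]] sorted_l perm_l;
  have := perm_size perm_l; rewrite size_xs // => _.
move: sorted_l => /= /and4P [l01 l12 l23 _].
have vals x : x \in [:: l0; l1; l2; l3] -> [\/ x = 0, x = a | x = b].
  by move=> x_l; apply: xs_vals; rewrite -(perm_mem perm_l).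
rewrite -(perm_big _ perm_l) !big_cons big_nil /= addr0 in sum_xs.
have l3_ge0 : 0 <= l3.
  by case: (vals l3) => [|->|->|->] //; rewrite ?inE ?eqxx ?orbT //; apply: le_trans le_ba.
rewrite ge_max subr_ge0 le_ba /=.
have [v0 v1] : ([\/ l0 = 0, l0 = a | l0 = b] * [\/ l1 = 0, l1 = a | l1 = b])%type.
  by split; apply: vals; rewrite !inE eqxx ?orbT.
have [v2 v3] : ([\/ l2 = 0, l2 = a | l2 = b] * [\/ l3 = 0, l3 = a | l3 = b])%type.
  by split; apply: vals; rewrite !inE eqxx ?orbT.
by case: v0 => e0; rewrite e0 in l01 sum_xs *; case: v1 => e1; rewrite e1 in l01 l12 sum_xs *;
  case: v2 => e2; rewrite e2 in l12 l23 sum_xs *;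
  case: v3 => e3; rewrite e3 in l23 l3_ge0 sum_xs *; nra.
Qed.

End WoottersCombination.

Lemma left_eigen2_root_char (K : idomainType) (k00 k01 k10 k11 a0 a1 z : K) :
  (a0 != 0) || (a1 != 0) ->
  z * a0 = a0 * k00 + a1 * k10 -> z * a1 = a0 * k01 + a1 * k11 ->
  z ^+ 2 - (k00 + k11) * z + (k00 * k11 - k01 * k10) = 0.
Proof.
move=> nz h0 h1; set P := _ + _.
have P0 : a0 * P = 0.
  transitivity ((k11 - z) * (a0 * k00 + a1 * k10 - z * a0)
                - k10 * (a0 * k01 + a1 * k11 - z * a1)); first by rewrite /P; ring.
  by rewrite h0 h1; ring.
have P1 : a1 * P = 0.
  transitivity ((k00 - z) * (a0 * k01 + a1 * k11 - z * a1)
                - k01 * (a0 * k00 + a1 * k10 - z * a0)); first by rewrite /P; ring.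
  by rewrite h0 h1; ring.
case/orP: nz => nz.
  by move/eqP: P0; rewrite mulf_eq0 (negbTE nz) => /eqP.
by move/eqP: P1; rewrite mulf_eq0 (negbTE nz) => /eqP.
Qed.

Section WoottersMatrix.
Variable R : realType.
Local Notation C := R[i].
Implicit Types v : 'I_2 -> 'cV[C]_(2 * 2).

Definition Ymat : 'M[C]_(2 * 2) := sigma2 R *t sigma2 R.

Lemma YmatE : Ymat = - (tau R *t tau R).
Proof. by rewrite /Ymat sigma2E tensmxZl tensmxZr scalerA -expr2 sqr_i scaleN1r. Qed.

Lemma trmx_Ymat : Ymat^T = Ymat.
Proof.
rewrite YmatE linearN /= trmx_tens trmx_tau -[- tau R]scaleN1r tensmxZl tensmxZr scalerA.
by rewrite mulrNN mulr1 scale1r.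
Qed.

Lemma map_conjc_Ymat : map_mx conjc Ymat = Ymat.
Proof. by rewrite YmatE map_mxN map_mxT map_conjc_tau. Qed.

Definition ydot v (c e : 'I_2) : C := ((v c)^T *m Ymat *m v e) 0 0.
Definition wootters_mx v : 'M[C]_(2 * 2) :=
  red_state v *m Ymat *m map_mx conjc (red_state v) *m Ymat.
Definition wtrace v : C := \sum_(c < 2) \sum_(e < 2) (ydot v c e)^* * ydot v c e.
Definition wdet v : C := ydot v 0 0 * ydot v 1 1 - ydot v 0 1 * ydot v 1 0.

Lemma ydotC v c e : ydot v e c = ydot v c e.
Proof.
rewrite /ydot -[in LHS](trmxK ((v e)^T *m Ymat *m v c)) [in LHS]mxE.
by rewrite !trmx_mul trmxK trmx_Ymat mulmxA.
Qed.

Lemma wootters_mxE v : wootters_mx v =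
  \sum_(c < 2) \sum_(e < 2) (ydot v c e)^* *: (v c *m ((v e)^T *m Ymat)).
Proof.
rewrite /wootters_mx /red_state raddf_sum /= !mulmx_suml; apply: eq_bigr => c _.
rewrite mulmx_sumr mulmx_suml; apply: eq_bigr => e _.
have adjJ : map_mx conjc (adjmx (v e)) = (v e)^T.
  by apply/matrixP => i j; rewrite !mxE conjcK.
have inner : adjmx (v c) *m Ymat *m map_mx conjc (v e) = (ydot v c e)^* %:M.
  rewrite [LHS]mx11_scalar; congr (_%:M).
  have -> : adjmx (v c) *m Ymat *m map_mx conjc (v e) =
            map_mx conjc ((v c)^T *m Ymat *m v e).
    by rewrite !map_mxM map_conjc_Ymat /adjmx map_trmx.
  by rewrite mxE.
by rewrite map_mxM adjJ scalemxAl -mul_mx_scalar -inner !mulmxA.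
Qed.

Lemma mxtrace_wootters_mx v : \tr (wootters_mx v) = wtrace v.
Proof.
rewrite wootters_mxE raddf_sum /= /wtrace; apply: eq_bigr => c _.
rewrite raddf_sum /=; apply: eq_bigr => e _.
by rewrite mxtraceZ mxtrace_mulC trace_mx11 -/(ydot v e c) ydotC.
Qed.

Lemma eigenvalue_wootters_mx v z : eigenvalue (wootters_mx v) z ->
  z = 0 \/ z ^+ 2 - wtrace v * z + wdet v * (wdet v)^* = 0.
Proof.
case/eigenvalueP => w wM wnz.
pose a c := (w *m v c) 0 0.
pose k c d := \sum_(e < 2) (ydot v c e)^* * ydot v e d.
have wME : w *m wootters_mx v =
    \sum_(c < 2) \sum_(e < 2) ((ydot v c e)^* * a c) *: ((v e)^T *m Ymat).
  rewrite wootters_mxE mulmx_sumr; apply: eq_bigr => c _.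
  rewrite mulmx_sumr; apply: eq_bigr => e _.
  by rewrite -scalemxAr (mulmxA w (v c)) [w *m v c]mx11_scalar mul_scalar_mx scalerA.
have coord d : z * a d = \sum_(c < 2) a c * k c d.
  transitivity (((z *: w) *m v d) 0 0); first by rewrite -scalemxAl mxE.
  rewrite -wM wME mulmx_suml summxE; apply: eq_bigr => c _.
  rewrite mulmx_suml summxE /k mulr_sumr; apply: eq_bigr => e _.
  by rewrite -scalemxAl mxE -/(ydot v e d) mulrCA mulrA.
have [nz | a0] := boolP ((a 0 != 0) || (a 1 != 0)); last first.
  have a_eq0 c : a c = 0.
    by move: a0; rewrite negb_or !negbK => /andP [/eqP ? /eqP ?]; case: (ord2P c) => ->.
  left; apply/eqP; suff : z *: w == 0 by rewrite scaler_eq0 (negbTE wnz) orbF.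
  rewrite -wM wME big1 // => c _; rewrite big1 // => e _.
  by rewrite a_eq0 mulr0 scale0r.
right; have [c0 c1] := (coord 0, coord 1); rewrite !big_ord2 in c0 c1.
rewrite -[RHS](left_eigen2_root_char nz c0 c1) /k /wtrace /wdet.
have := ydotC v 1 0; move: (ydot v) => t t10.
by rewrite !big_ord2 t10 !rmorphB !rmorphM /=; ring.
Qed.

Lemma wtraceE v :
  wtrace v = (\sum_(c < 2) \sum_(e < 2) normc (ydot v c e) ^+ 2)%:C.
Proof.
rewrite rmorph_sum; apply: eq_bigr => c _; rewrite rmorph_sum; apply: eq_bigr => e _.
by rewrite mulrC mulcJ_normc.
Qed.

Lemma wdet_le_wtrace v : 2 * normc (wdet v) <= complex.Re (wtrace v).
Proof.
rewrite wtraceE /= !big_ord2 /wdet ydotC.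
have := le_normcD (ydot v 0 0 * ydot v 1 1) (- (ydot v 1 0 * ydot v 1 0)).
rewrite normcN !normcM.
move: (normc_ge0 (ydot v 0 0)) (normc_ge0 (ydot v 1 1)) (normc_ge0 (ydot v 1 0)).
move: (normc (ydot v 0 0)) (normc (ydot v 1 1)) (normc (ydot v 1 0)) => x y u x0 y0 u0 h.
have := sqr_ge0 (x - y); nra.
Qed.

End WoottersMatrix.

Lemma exists_sqrs_sum_prod (R : rcfType) (F G : R) : 0 <= G -> 2 * G <= F ->
  exists a b, [/\ 0 <= b, b <= a, a ^+ 2 + b ^+ 2 = F & a * b = G].
Proof.
move=> G0 GF; pose p := Num.sqrt (F + 2 * G); pose m := Num.sqrt (F - 2 * G).
have p2 : p ^+ 2 = F + 2 * G by rewrite sqr_sqrtr //; lra.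
have m2 : m ^+ 2 = F - 2 * G by rewrite sqr_sqrtr //; lra.
have m0 : 0 <= m by apply: sqrtr_ge0.
have mp : m <= p by rewrite ler_sqrt; lra.
exists ((p + m) / 2), ((p - m) / 2); split.
- by rewrite divr_ge0 // subr_ge0.
- by rewrite ler_pM2r //; lra.
- have -> : ((p + m) / 2) ^+ 2 + ((p - m) / 2) ^+ 2 = (p ^+ 2 + m ^+ 2) / 2 by field.
  by rewrite p2 m2; field.
- have -> : (p + m) / 2 * ((p - m) / 2) = (p ^+ 2 - m ^+ 2) / 4 by field.
  by rewrite p2 m2; field.
Qed.

Section ConcurrenceBound.
Variable R : realType.
Local Notation C := R[i].

Lemma concurrence_sqr_le (v : 'I_2 -> 'cV[C]_(2 * 2)) :
  concurrence (red_state v) ^+ 2 <= complex.Re (wtrace v) - 2 * normc (wdet v).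
Proof.
have [a [b [b0 ba ab2 abG]]] :=
  exists_sqrs_sum_prod (normc_ge0 (wdet v)) (wdet_le_wtrace v).
set F := complex.Re (wtrace v) in ab2 *; set G := normc (wdet v) in abG *.
have FE : wtrace v = F%:C by rewrite /F wtraceE.
have a0 : 0 <= a by apply: le_trans ba.
set s := eigenvalues (wootters_mx v).
have vals z : z \in s -> [\/ z = 0, z = (a ^+ 2)%:C | z = (b ^+ 2)%:C].
  move=> /eigenvalue_mem /eigenvalue_wootters_mx [-> | ]; first by constructor 1.
  rewrite mulcJ_normc -/G FE -ab2 -abG => h.
  have /eqP : (z - (a ^+ 2)%:C) * (z - (b ^+ 2)%:C) = 0.
    by rewrite -[RHS]h !rmorphD !rmorphXn rmorphM /=; ring.
  by rewrite mulf_eq0 !subr_eq0 => /orP [/eqP -> | /eqP ->]; [constructor 2 | constructor 3].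
have sumRe : \sum_(z <- s) complex.Re z = a ^+ 2 + b ^+ 2.
  by rewrite -Re_sum sum_eigenvalues // mxtrace_wootters_mx FE.
pose xs := [seq Num.sqrt (complex.Re z) | z <- s].
have xs_vals : {in xs, forall x, [\/ x = 0, x = a | x = b]}.
  move=> x /mapP [z /vals [] -> ->]; rewrite /= ?sqrtr0 ?sqrtr_sqr ?ger0_norm //.
  - by constructor 1.
  - by constructor 2.
  - by constructor 3.
have xs_sum : \sum_(x <- xs) x ^+ 2 = a ^+ 2 + b ^+ 2.
  rewrite big_map -sumRe big_seq [RHS]big_seq; apply: eq_bigr => z /vals [] -> /=;
    by rewrite ?sqrtr0 ?expr0n // sqr_sqrtr // sqr_ge0.
have xs_size : size xs = 4%N by rewrite size_map size_eigenvalues.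
have cab := wootters_comb_le xs_size b0 ba xs_vals xs_sum.
have c0 : 0 <= wootters_comb xs by rewrite /wootters_comb le_max lexx.
rewrite -[concurrence _]/(wootters_comb xs).
have -> : F - 2 * G = (a - b) ^+ 2 by rewrite -ab2 -abG; ring.
by rewrite ler_pXn2r // ?nnegrE // subr_ge0.
Qed.

End ConcurrenceBound.

Section DetExcess.
Variable R : realType.
Local Notation C := R[i].
Implicit Types psi : 'I_2 -> 'I_2 -> 'I_2 -> C.

Definition tform psi (a e : 'I_2) : C :=
  psi a 0 0 * psi e 1 1 - psi a 0 1 * psi e 1 0 - psi a 1 0 * psi e 0 1 + psi a 1 1 * psi e 0 0.

(* [hdet psi] is minus Cayley's hyperdeterminant of [psi], so the three-tangle
   is [4 * normc (hdet psi)]. *)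
Definition hdet psi : C := tform psi 0 0 * tform psi 1 1 - tform psi 0 1 * tform psi 1 0.

Lemma hdet_swapAB psi : hdet (swapAB psi) = hdet psi.
Proof. by rewrite /hdet /tform /swapAB; ring. Qed.

Lemma hdet_swapAC psi : hdet (swapAC psi) = hdet psi.
Proof. by rewrite /hdet /tform /swapAC; ring. Qed.

Definition det_excess psi : R :=
  complex.Re (detA psi + detB psi + detC psi) - 3 * normc (hdet psi)
  - 2 / 3 * complex.Re (sqnorm psi) ^+ 2.

Lemma det_excess_swapAB psi : det_excess (swapAB psi) = det_excess psi.
Proof.
rewrite /det_excess hdet_swapAB sqnorm_swapAB detC_swapAB.
rewrite -[detA (swapAB psi)]/(detB psi) -[detB (swapAB psi)]/(detA psi).
by congr (complex.Re _ - _ - _); ring.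
Qed.

Lemma det_excess_swapAC psi : det_excess (swapAC psi) = det_excess psi.
Proof.
rewrite /det_excess hdet_swapAC sqnorm_swapAC detB_swapAC.
rewrite -[detA (swapAC psi)]/(detC psi) -[detC (swapAC psi)]/(detA psi).
by congr (complex.Re _ - _ - _); ring.
Qed.

(* [qmat al be] is [sqrt (|al|^2 + |be|^2)] times a matrix of SU(2). *)
Definition qmat (al be : C) (a c : 'I_2) : C :=
  if a == 0 then (if c == 0 then al else be) else (if c == 0 then - be^* else al^*).
Definition qnorm (al be : C) : C := al * al^* + be * be^*.

Definition actA al be psi : 'I_2 -> 'I_2 -> 'I_2 -> C :=
  fun a j k => qmat al be a 0 * psi 0 j k + qmat al be a 1 * psi 1 j k.

Ltac expand_actA :=
  rewrite /actA /qmat /= ?big_ord2 /= ?(conjCD, conjCB, conjCM, conjCN, conjCK).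

Lemma detA_actA al be psi : detA (actA al be psi) = qnorm al be ^+ 2 * detA psi.
Proof. by rewrite /detA /gramA /qnorm; expand_actA; ring. Qed.

Lemma detB_actA al be psi : detB (actA al be psi) = qnorm al be ^+ 2 * detB psi.
Proof. by rewrite /detB /detA /gramA /swapAB /qnorm; expand_actA; ring. Qed.

Lemma detC_actA al be psi : detC (actA al be psi) = qnorm al be ^+ 2 * detC psi.
Proof. by rewrite /detC /detA /gramA /swapAC /qnorm; expand_actA; ring. Qed.

Lemma sqnorm_actA al be psi : sqnorm (actA al be psi) = qnorm al be * sqnorm psi.
Proof. by rewrite /sqnorm /qnorm; expand_actA; ring. Qed.

Lemma hdet_actA al be psi : hdet (actA al be psi) = qnorm al be ^+ 2 * hdet psi.
Proof. by rewrite /hdet /tform /qnorm; expand_actA; ring. Qed.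

Lemma qnormE al be : qnorm al be = (normc al ^+ 2 + normc be ^+ 2)%:C.
Proof. by rewrite /qnorm !mulcJ_normc rmorphD. Qed.

Lemma det_excess_actA al be psi : (al != 0) || (be != 0) ->
  det_excess (actA al be psi) = (normc al ^+ 2 + normc be ^+ 2) ^+ 2 * det_excess psi.
Proof.
move=> nz; rewrite /det_excess detA_actA detB_actA detC_actA sqnorm_actA hdet_actA qnormE.
rewrite -!mulrDr -rmorphXn !Re_realM normcM normc_real ?exprn_ge0 ?addr_ge0 ?sqr_ge0 //.
by rewrite exprMn; ring.
Qed.

Lemma det_excess_actA_le0 al be psi : (al != 0) || (be != 0) ->
  det_excess (actA al be psi) <= 0 -> det_excess psi <= 0.
Proof.
move=> nz; rewrite det_excess_actA // pmulr_rle0 // exprn_gt0 //.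
have := sqr_ge0 (normc al); have := sqr_ge0 (normc be).
by case/orP: nz => /normc_gt0 n0; nra.
Qed.

Lemma det_excess_actB_le0 al be psi : (al != 0) || (be != 0) ->
  det_excess (swapAB (actA al be (swapAB psi))) <= 0 -> det_excess psi <= 0.
Proof.
by move=> nz; rewrite det_excess_swapAB => /(det_excess_actA_le0 nz); rewrite det_excess_swapAB.
Qed.

Lemma det_excess_actC_le0 al be psi : (al != 0) || (be != 0) ->
  det_excess (swapAC (actA al be (swapAC psi))) <= 0 -> det_excess psi <= 0.
Proof.
by move=> nz; rewrite det_excess_swapAC => /(det_excess_actA_le0 nz); rewrite det_excess_swapAC.
Qed.

End DetExcess.

Lemma canonical_form_ineq (R : realFieldType) (M K W w : R) :
  0 <= M -> 0 <= K -> 0 <= W -> 0 <= w -> w <= (K + W) / 2 ->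
  2 * M * W + 2 * w ^+ 2 <= 2 / 3 * (M + K + W) ^+ 2.
Proof.
move=> M0 K0 W0 w0 wKW.
have w2 : w ^+ 2 <= ((K + W) / 2) ^+ 2 by rewrite ler_pXn2r // nnegrE; lra.
have := sqr_ge0 (2 * M - W); have := mulr_ge0 M0 K0; nra.
Qed.

Lemma singular2_kernel (K : idomainType) (a b c d : K) : a * d - b * c = 0 ->
  exists u0 u1, [/\ (u0 != 0) || (u1 != 0), a * u0 + b * u1 = 0 & c * u0 + d * u1 = 0].
Proof.
move=> det0; have [ab0 | ab] := boolP ((a == 0) && (b == 0)).
  case/andP: ab0 => /eqP -> /eqP ->.
  have [cd0 | cd] := boolP ((c == 0) && (d == 0)).
    by case/andP: cd0 => /eqP -> /eqP ->; exists 1, 0; rewrite oner_eq0; split => //; ring.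
  exists d, (- c); split; last by ring.
  - by rewrite oppr_eq0 orbC -negb_and.
  - by ring.
exists b, (- a); split.
- by rewrite oppr_eq0 orbC -negb_and.
- by ring.
- by rewrite -oppr0 -det0; ring.
Qed.

Lemma binary_quadratic_root (K : closedFieldType) (p q r : K) :
  exists al be : K, ((al != 0) || (be != 0)) /\ al ^+ 2 * p + al * be * q + be ^+ 2 * r = 0.
Proof.
have [-> | r0] := eqVneq r 0.
  by exists 0, 1; rewrite oner_eq0 orbT; split => //; ring.
have [x hx] := @solve_monicpoly K 2 (fun i => if i == 0%N then - p / r else - q / r) isT.
exists 1, x; rewrite oner_eq0; split => //.
by rewrite big_ord2 /= in hx; rewrite hx; field.
Qed.

Section Canonical.
Variable R : realType.
Local Notation C := R[i].
Implicit Types psi : 'I_2 -> 'I_2 -> 'I_2 -> C.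

Lemma det_excess_canonical psi :
  psi 0 0 1 = 0 -> psi 0 1 0 = 0 -> psi 0 1 1 = 0 -> det_excess psi <= 0.
Proof.
move=> z1 z2 z3.
set l := psi 0 0 0; set p := psi 1 0 0; set q := psi 1 0 1.
set r := psi 1 1 0; set s := psi 1 1 1; set w := p * s - q * r.
have detsE : detA psi + detB psi + detC psi =
    (2 * normc l ^+ 2 * (normc q ^+ 2 + normc r ^+ 2)
     + 3 * normc l ^+ 2 * normc s ^+ 2 + 2 * normc w ^+ 2)%:C.
  rewrite !(rmorphD, rmorphM) /= ?rmorph_nat !normcC_mul.
  rewrite /detB /detC /detA /gramA /swapAB /swapAC !big_ord2 /= z1 z2 z3 -/l -/p -/q -/r -/s.
  by rewrite /w !(conjCB, conjCM); ring.
have hdetE : normc (hdet psi) = normc l ^+ 2 * normc s ^+ 2.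
  have -> : hdet psi = - (l * s) ^+ 2.
    by rewrite /hdet /tform z1 z2 z3 -/l -/p -/q -/r -/s; ring.
  by rewrite normcN expr2 !normcM; ring.
have sqnormE : sqnorm psi = (normc l ^+ 2 + (normc p ^+ 2 + normc s ^+ 2)
    + (normc q ^+ 2 + normc r ^+ 2))%:C.
  rewrite !rmorphD /= -!mulcJ_normc /sqnorm !big_ord2 z1 z2 z3 -/l -/p -/q -/r -/s.
  by ring.
have w_le : normc w <= normc p * normc s + normc q * normc r.
  by rewrite -!normcM -(normcN (q * r)); apply: le_normcD.
have w_half :
    normc w <= ((normc p ^+ 2 + normc s ^+ 2) + (normc q ^+ 2 + normc r ^+ 2)) / 2.
  apply: (le_trans w_le).
  have := sqr_ge0 (normc p - normc s); have := sqr_ge0 (normc q - normc r); nra.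
have := canonical_form_ineq (sqr_ge0 (normc l))
  (addr_ge0 (sqr_ge0 (normc p)) (sqr_ge0 (normc s)))
  (addr_ge0 (sqr_ge0 (normc q)) (sqr_ge0 (normc r))) (normc_ge0 w) w_half.
by rewrite /det_excess detsE hdetE sqnormE /=; lra.
Qed.

Lemma det_excess_le0_zero_col psi : psi 0 0 1 = 0 -> psi 0 1 1 = 0 -> det_excess psi <= 0.
Proof.
move=> z1 z3; have [z2 | nz2] := eqVneq (psi 0 1 0) 0; first exact: det_excess_canonical.
apply: (det_excess_actB_le0 (al := (psi 0 0 0)^*) (be := (psi 0 1 0)^*)).
  by rewrite !conjC_eq0 nz2 orbT.
by apply: det_excess_canonical; rewrite /swapAB /actA /qmat /= ?conjCK ?z1 ?z3; ring.
Qed.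

Lemma det_excess_le0_singular_slice psi :
  psi 0 0 0 * psi 0 1 1 - psi 0 0 1 * psi 0 1 0 = 0 -> det_excess psi <= 0.
Proof.
case/singular2_kernel => u0 [u1 [nz k0 k1]].
apply: (det_excess_actC_le0 (al := u1^*) (be := - u0^*)).
  by rewrite oppr_eq0 !conjC_eq0 orbC.
apply: det_excess_le0_zero_col; rewrite /swapAC /actA /qmat /= ?conjCN ?conjCK.
  by rewrite -[RHS]k0; ring.
by rewrite -[RHS]k1; ring.
Qed.

(* An operation on A makes the slice [psi 0] singular, one on C then clears its
   second column, and one on B clears [psi 0 1 0]. *)
Lemma det_excess_le0 psi : det_excess psi <= 0.
Proof.
have [al [be [nz root]]] := binary_quadratic_root
  (psi 0 0 0 * psi 0 1 1 - psi 0 0 1 * psi 0 1 0)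
  (psi 0 0 0 * psi 1 1 1 + psi 0 1 1 * psi 1 0 0 - psi 0 0 1 * psi 1 1 0 - psi 0 1 0 * psi 1 0 1)
  (psi 1 0 0 * psi 1 1 1 - psi 1 0 1 * psi 1 1 0).
apply: (det_excess_actA_le0 nz); apply: det_excess_le0_singular_slice.
by rewrite /actA /qmat /= -[RHS]root; ring.
Qed.

End Canonical.

Section Monogamy.
Variable R : realType.
Local Notation C := R[i].
Implicit Types psi : 'I_2 -> 'I_2 -> 'I_2 -> C.

Lemma Scorr_rhoAC psi :
  (Scorr (rho_AC psi))%:C = sqnorm psi ^+ 2 - 8 * detB psi + 4 * detA psi + 4 * detC psi.
Proof. by rewrite (Scorr_rhoBC (swapAB psi)) sqnorm_swapAB detC_swapAB. Qed.

Lemma Scorr_rhoAB psi :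
  (Scorr (rho_AB psi))%:C = sqnorm psi ^+ 2 - 8 * detC psi + 4 * detA psi + 4 * detB psi.
Proof.
rewrite (Scorr_rhoBC (swapAC (swapAB psi))) sqnorm_swapAC sqnorm_swapAB detB_swapAC.
by rewrite -[detA (swapAC _)]/(detC (swapAB psi)) detC_swapAB.
Qed.

Lemma ydot_slice psi c e : ydot (slice psi) c e = - tform psi c e.
Proof.
rewrite /ydot YmatE mulmxN mulNmx [fun_of_matrix (- _) _ _]mxE; congr (- _).
rewrite mxE big_mxtens.
under eq_bigr => j' _ do under eq_bigr => k' _ do
  rewrite mxE big_mxtens slice_tens.
under eq_bigr => j' _ do under eq_bigr => k' _ do under eq_bigr => j _ do
  under eq_bigr => k _ do rewrite [fun_of_matrix (_^T) _ _]mxE slice_tens tensmxE.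
rewrite !big_ord2 /tform !mxE /=; ring.
Qed.

Lemma wdet_slice psi : wdet (slice psi) = hdet psi.
Proof. by rewrite /wdet !ydot_slice /hdet; ring. Qed.

Lemma wtrace_slice psi : wtrace (slice psi) = 2 * (detB psi + detC psi - detA psi).
Proof.
rewrite /wtrace !big_ord2 !ydot_slice !conjCN /tform !(conjCD, conjCB, conjCM).
by rewrite /detB /detC /detA /gramA /swapAB /swapAC !big_ord2; ring.
Qed.

Lemma Scorr_pair_concurrence_le psi (s1 s2 : R) : sqnorm psi = 1 ->
  (s1 + s2)%:C = 2 + 8 * detA psi - 4 * detB psi - 4 * detC psi ->
  s1 + s2 + 3 * concurrence (rho_BC psi) ^+ 2 <= 10 / 3.
Proof.
move=> sq1 hs.
have hc := concurrence_sqr_le (slice psi); rewrite wdet_slice in hc.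
have hk := det_excess_le0 psi; rewrite /det_excess sq1 in hk.
have lin : s1 + s2 + 3 * complex.Re (wtrace (slice psi)) =
           2 + 2 * complex.Re (detA psi + detB psi + detC psi).
  transitivity (complex.Re ((s1 + s2)%:C + 3 * wtrace (slice psi))).
    by rewrite raddfD /= Re_natM.
  rewrite hs wtrace_slice.
  have -> : 2 + 8 * detA psi - 4 * detB psi - 4 * detC psi
            + 3 * (2 * (detB psi + detC psi - detA psi))
            = 2 + 2 * (detA psi + detB psi + detC psi) by ring.
  by rewrite raddfD /= Re_natM.
rewrite /= expr1n in hk; lra.
Qed.

End Monogamy.

Lemma max_min_bound (R : realDomainType) (x y z u v w c : R) :
  x + y + 3 * w <= c -> x + z + 3 * v <= c -> y + z + 3 * u <= c ->
  Num.max (x + y) (Num.max (x + z) (y + z)) + 3 * Num.min u (Num.min v w) <= c.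
Proof.
move=> hw hv hu; have m_le : [/\ Num.min u (Num.min v w) <= u,
    Num.min u (Num.min v w) <= v & Num.min u (Num.min v w) <= w].
  by split; rewrite !ge_min lexx ?orbT.
case: m_le; set m := Num.min _ _ => mu mv mw.
rewrite -lerBrDr !ge_max !lerBrDr; apply/and3P; split; lra.
Qed.

Theorem theorem6 (R : realType) (psi : 'I_2 -> 'I_2 -> 'I_2 -> R[i]) :
  unit_state psi ->
  S_total_max psi + 3 * E_W psi <= 10 / 3.
Proof.
move=> hpsi; have sqnorm1 : sqnorm psi = 1 := hpsi.
have SAB := Scorr_rhoAB psi; have SAC := Scorr_rhoAC psi.
have SBC := Scorr_rhoBC psi; rewrite sqnorm1 expr1n in SAB SAC SBC.
apply: max_min_bound.
- by apply: Scorr_pair_concurrence_le => //; rewrite rmorphD /= SAB SAC; ring.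
- apply: (Scorr_pair_concurrence_le (psi := swapAB psi)); first by rewrite sqnorm_swapAB.
  rewrite rmorphD /= SAB SBC detC_swapAB.
  by rewrite -[detA (swapAB psi)]/(detB psi) -[detB (swapAB psi)]/(detA psi); ring.
- apply: (Scorr_pair_concurrence_le (psi := swapAC (swapAB psi))).
    by rewrite sqnorm_swapAC sqnorm_swapAB.
  rewrite rmorphD /= SAC SBC detB_swapAC.
  rewrite -[detA (swapAC _)]/(detC (swapAB psi)) detC_swapAB.
  by rewrite -[detB (swapAB psi)]/(detA psi) -[detC (swapAC _)]/(detB psi); ring.
Qed.
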